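(* Let $\delta,\varepsilon\in[0,1)$, let $\mathscr{H}$ be a complex Hilbert space, let $\mathscr{A}$ be a $C^*$-algebra with $\mathbb{K}(\mathscr{H})\subseteq\mathscr{A}\subseteq\mathbb{B}(\mathscr{H})$, let $\mathscr{E},\mathscr{F}$ be inner product $\mathscr{A}$-modules, and let $e=\eta\otimes\eta$ be a minimal projection ($\eta\in\mathscr{H}$ a unit vector). Then: (i) $x,y\in\mathscr{E}_e$ are $\delta$-orthogonal in the inner product space $\mathscr{E}_e$ if and only if they are $\delta$-orthogonal in $\mathscr{E}$; (ii) if $T:\mathscr{E}\to\mathscr{F}$ is an $\mathscr{A}$-linear $(\delta,\varepsilon)$-orthogonality preserving mapping, then $T$ maps $\mathscr{E}_e$ into $\mathscr{F}_e$ and its restriction $T_e:\mathscr{E}_e\to\mathscr{F}_e$ is a linear $(\delta,\varepsilon)$-orthogonality preserving mapping between inner product spaces.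
   Context: An inner product $\mathscr{A}$-module is a right $\mathscr{A}$-module with an $\mathscr{A}$-valued inner product $\langle\cdot,\cdot\rangle$ ($\mathbb{C}$-linear and $\mathscr{A}$-linear in the second variable, $\langle x,y\rangle^*=\langle y,x\rangle$, $\langle x,x\rangle\geq0$ with equality iff $x=0$), with norm $\|x\|=\|\langle x,x\rangle\|^{1/2}$. A map is $\mathscr{A}$-linear if it is linear and $T(xa)=(Tx)a$. For $\eta,\zeta\in\mathscr{H}$, $\eta\otimes\zeta$ is the rank-one operator $\xi\mapsto(\xi,\zeta)\eta$. For a minimal projection $e=\eta\otimes\eta$, $\mathscr{E}_e=\{xe:x\in\mathscr{E}\}$ is a complex inner product space with inner product $(x,y)=\mathrm{tr}(\langle x,y\rangle)$; one has $\langle x,y\rangle=(x,y)e$ for $x,y\in\mathscr{E}_e$. In an inner product space, $x,y$ are $\delta$-orthogonal if $|(x,y)|\leq\delta\|x\|\|y\|$; in $\mathscr{E}$, if $\|\langle x,y\rangle\|\leq\delta\|x\|\|y\|$. A map is $(\delta,\varepsilon)$-orthogonality preserving if $\delta$-orthogonal pairs are mapped to $\varepsilon$-orthogonal pairs. *)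

From mathcomp Require Import all_boot all_order all_algebra.
From mathcomp Require Import complex.
From mathcomp Require Import boolp classical_sets reals.

Set Implicit Arguments.
Unset Strict Implicit.
Unset Printing Implicit Defensive.

Import Order.TTheory GRing.Theory Num.Theory.
Local Open Scope ring_scope.
Local Open Scope classical_set_scope.

Section Defs.
Variable R : realType.
Local Notation C := (R[i]).

(* linear in the first variable, conjugate-linear in the second        *)
(* (so that (eta (x) zeta) xi = (xi, zeta) eta as in the paper).       *)
Variable H : lmodType C.
Variable ip : H -> H -> C.

Definition hnorm (xi : H) : R := Num.sqrt (complex.Re (ip xi xi)).

Definition hcauchy (u : nat -> H) : Prop :=
  forall e : R, 0 < e -> exists N : nat, forall m n : nat,
    (N <= m)%N -> (N <= n)%N -> hnorm (u m - u n) < e.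

Definition hconverges (u : nat -> H) (l : H) : Prop :=
  forall e : R, 0 < e -> exists N : nat, forall n : nat,
    (N <= n)%N -> hnorm (u n - l) < e.

Definition is_hilbert : Prop :=
  (((forall (a : C) (x y z : H), ip (a *: x + y) z = a * ip x z + ip y z)) /\ ((forall x y : H, ip x y = (ip y x)^*)) /\ ((forall x : H, 0 <= ip x x)) /\ ((forall x : H, ip x x = 0 -> x = 0)) /\ ((forall u : nat -> H, hcauchy u -> exists l, hconverges u l))).

Definition op_linear (T : H -> H) : Prop :=
  forall (a : C) (x y : H), T (a *: x + y) = a *: T x + T y.

Definition op_bounded (T : H -> H) : Prop :=
  exists M : R, forall x : H, hnorm (T x) <= M * hnorm x.

Definition bounded_op (T : H -> H) : Prop := op_linear T /\ op_bounded T.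

Definition opnorm (T : H -> H) : R :=
  sup [set hnorm (T x) | x in [set x : H | hnorm x <= 1]].

Definition is_adjoint (T S : H -> H) : Prop :=
  forall x y : H, ip (T x) y = ip x (S y).

(* compact operators K(H): bounded linear operators mapping bounded
   sequences to sequences having a Cauchy (hence, H being complete,
   convergent) subsequence, i.e. the image of the unit ball is
   relatively compact. *)
Definition compact_op (T : H -> H) : Prop :=
  bounded_op T /\
  forall u : nat -> H, (exists M : R, forall n, hnorm (u n) <= M) ->
    exists phi : nat -> nat, (forall n, (phi n < phi n.+1)%N) /\
      hcauchy (fun n => T (u (phi n))).

Definition is_Cstar_subalg (A : set (H -> H)) : Prop :=
  (((forall a, A a -> bounded_op a)) /\ (A (fun _ => 0)) /\ ((forall a b, A a -> A b -> A (fun x => a x + b x))) /\ ((forall (c : C) a, A a -> A (fun x => c *: a x))) /\ ((forall a b, A a -> A b -> A (a \o b))) /\ ((forall a, A a -> exists2 b, A b & is_adjoint a b)) /\ ((forall (u : nat -> (H -> H)) (T : H -> H),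
         (forall n, A (u n)) -> bounded_op T ->
         (forall e : R, 0 < e -> exists N : nat, forall n : nat,
              (N <= n)%N -> opnorm (fun x => u n x - T x) < e) ->
         A T))).

Definition op_pos (a : H -> H) : Prop := forall x : H, 0 <= ip (a x) x.

Definition rank_one (eta zeta : H) : H -> H := fun xi => ip xi zeta *: eta.

(* E is a complex vector space with a right action of A, act x a = xa *)
Definition is_ip_module (A : set (H -> H)) (E : lmodType C)
    (act : E -> (H -> H) -> E) (ipE : E -> E -> (H -> H)) : Prop :=
  ((
      (forall (x y : E) a, A a -> act (x + y) a = act x a + act y a)) /\ ((forall (x : E) a b, A a -> A b ->
          act x (fun h => a h + b h) = act x a + act x b)) /\ ((forall (x : E) a b, A a -> A b -> act x (a \o b) = act (act x a) b)) /\ ((forall (c : C) (x : E) a, A a ->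
          act (c *: x) a = c *: act x a /\ act x (fun h => c *: a h) = c *: act x a)) /\ (
      (forall x y : E, A (ipE x y))) /\ (
      (forall (c : C) (x y z : E),
          ipE x (c *: y + z) = (fun h => c *: ipE x y h + ipE x z h))) /\ (
      (forall (x y : E) a, A a -> ipE x (act y a) = ipE x y \o a)) /\ (
      (forall x y : E, is_adjoint (ipE x y) (ipE y x))) /\ (
      (forall x : E, op_pos (ipE x x) /\ (ipE x x = (fun _ => 0) -> x = 0)))).

Definition mnorm (E : lmodType C) (ipE : E -> E -> (H -> H)) (x : E) : R :=
  Num.sqrt (opnorm (ipE x x)).

Definition morth (E : lmodType C) (ipE : E -> E -> (H -> H))
    (delta : R) (x y : E) : Prop :=
  opnorm (ipE x y) <= delta * mnorm ipE x * mnorm ipE y.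

Definition Ee (E : lmodType C) (act : E -> (H -> H) -> E) (e : H -> H) : set E :=
  [set y | exists x : E, y = act x e].

(* the inner product (x, y) = tr(<x, y>) on E_e, e = eta (x) eta with eta a
   unit vector; for x, y in E_e, <x,y> = (x,y) e, and the trace of the
   operator c e is c = ((c e) eta, eta).  *)
Definition ipe (E : lmodType C) (ipE : E -> E -> (H -> H)) (eta : H)
    (x y : E) : C := ip (ipE x y eta) eta.

Definition enorm (E : lmodType C) (ipE : E -> E -> (H -> H)) (eta : H) (x : E) : R :=
  Num.sqrt (complex.Re (ipe ipE eta x x)).

Definition eorth (E : lmodType C) (ipE : E -> E -> (H -> H)) (eta : H)
    (delta : R) (x y : E) : Prop :=
  `|ipe ipE eta x y| <= ((delta * enorm ipE eta x * enorm ipE eta y)%:C)%C.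

Definition Alinear (A : set (H -> H)) (E F : lmodType C)
    (actE : E -> (H -> H) -> E) (actF : F -> (H -> H) -> F) (T : E -> F) : Prop :=
  (forall (c : C) (x y : E), T (c *: x + y) = c *: T x + T y) /\
  (forall (x : E) a, A a -> T (actE x a) = actF (T x) a).

End Defs.

From mathcomp Require Import all_boot all_order all_algebra.
From mathcomp Require Import complex.
From mathcomp Require Import boolp classical_sets reals.
From mathcomp Require Import topology normedtype sequences.
From mathcomp Require Import ring.
Import Order.TTheory GRing.Theory Num.Theory.
Import Normc numFieldNormedType.Exports.
Set Implicit Arguments.
Unset Strict Implicit.
Unset Printing Implicit Defensive.
Local Open Scope ring_scope.
Local Open Scope classical_set_scope.

(* Write e = η ⊗ η.  For x = x₀e and y = y₀e the module axioms give
   ⟨x, y⟩ = ⟨x, y₀⟩ ∘ e, and ⟨x, y₀⟩ is the adjoint of ⟨y₀, x₀⟩ ∘ e, hence equals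
   the rank-one operator η ⊗ ⟨y₀, x₀⟩η.  Thus ⟨x, y⟩ = (x, y) e, and since
   ‖c e‖ = |c| the module norm and the norm of E_e agree there, which is (i).
   An A-linear T sends x₀e to (T x₀)e, so it maps E_e into F_e, and (ii) follows
   from (i) in E and in F.  The module axioms may be used at e because a rank-one
   operator is compact, hence lies in A. *)

Section ComplexModulus.
Variable R : realType.
Implicit Types z : R[i].

Lemma normr_normc z : `|z| = (normc z)%:C%C.
Proof. by rewrite normc_def; case: z. Qed.

Lemma normc_ge0 z : 0 <= normc z.
Proof. by case: z => a b; rewrite sqrtr_ge0. Qed.

Lemma ger0_normc z : 0 <= z -> normc z = complex.Re z.
Proof.
case: z => a b; rewrite lecE /= => /andP[/eqP -> a0].
by rewrite expr0n /= addr0 sqrtr_sqr ger0_norm.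
Qed.

Lemma Re_le_normc z : `|complex.Re z| <= normc z.
Proof. by rewrite -lecR -normr_normc normc_ge_Re. Qed.

Lemma Im_le_normc z : `|complex.Im z| <= normc z.
Proof.
case: z => a b /=; rewrite -sqrtr_sqr ler_sqrt ?addr_ge0 ?sqr_ge0 //.
by rewrite lerDr sqr_ge0.
Qed.

Lemma normc_le_Re_Im z : normc z <= `|complex.Re z| + `|complex.Im z|.
Proof.
case: z => a b /=; rewrite -[X in _ <= X]ger0_norm ?addr_ge0 //.
rewrite -sqrtr_sqr ler_sqrt ?sqr_ge0 // sqrrD !real_normK ?num_real //.
by rewrite -addrA lerD2l lerDr mulrn_wge0 // mulr_ge0.
Qed.

End ComplexModulus.

Section BolzanoWeierstrass.
Variable R : realType.

Lemma cvgn_cauchy (v : R^nat) : cvgn v -> forall e : R, 0 < e ->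
  exists N, forall m n, (N <= m)%N -> (N <= n)%N -> `|v m - v n| < e.
Proof.
move=> cv e e0.
have [N _ hN] := (cvgrPdist_lt _ _).1 cv _ (divr_gt0 e0 (ltr0Sn _ 1)).
exists N => m n hm hn; rewrite (splitr e).
have -> : v m - v n = - (lim (v @ \oo) - v m) + (lim (v @ \oo) - v n) by ring.
by rewrite (le_lt_trans (ler_normD _ _)) // normrN ltrD // hN.
Qed.

Lemma bounded_bolzano_weierstrass (v : R^nat) (M : R) :
    (forall n, `|v n| <= M) ->
  exists2 f : nat -> nat, increasing_seq f & cvgn (v \o f).
Proof.
move=> vM; apply: bolzano_weierstrass; rewrite /bounded_near; near=> K => n _ /=.
by rewrite (le_trans (vM n)) //; near: K; apply: nbhs_pinfty_ge; rewrite num_real.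
Unshelve. all: end_near. Qed.

Lemma complex_bolzano_weierstrass (c : nat -> R[i]) (M : R) :
    (forall n, normc (c n) <= M) ->
  exists phi : nat -> nat, (forall n, (phi n < phi n.+1)%N) /\
    forall e : R, 0 < e -> exists N, forall m n, (N <= m)%N -> (N <= n)%N ->
      normc (c (phi m) - c (phi n)) < e.
Proof.
move=> cM.
have [f f_incr cvRe] : exists2 f : nat -> nat, increasing_seq f &
    cvgn ((fun n => complex.Re (c n)) \o f).
  by apply: bounded_bolzano_weierstrass => n; rewrite (le_trans (Re_le_normc _)).
have [g g_incr cvIm] : exists2 g : nat -> nat, increasing_seq g &
    cvgn ((fun n => complex.Im (c (f n))) \o g).
  by apply: bounded_bolzano_weierstrass => n; rewrite (le_trans (Im_le_normc _)).
exists (f \o g); split => [n|e e0]; first by rewrite /= (leqW_mono f_incr) (leqW_mono g_incr).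
have [N1 hN1] := cvgn_cauchy cvRe (divr_gt0 e0 (ltr0Sn _ 1)).
have [N2 hN2] := cvgn_cauchy cvIm (divr_gt0 e0 (ltr0Sn _ 1)).
exists (maxn N1 N2) => m n; rewrite !geq_max => /andP[m1 m2] /andP[n1 n2].
rewrite (le_lt_trans (normc_le_Re_Im _)) // (splitr e) ltrD //.
- by rewrite raddfB hN1 // (leq_trans _ (unstable.mono_leq_infl g_incr _)).
- by rewrite raddfB hN2.
Qed.

End BolzanoWeierstrass.

Section InnerProduct.
Variables (R : realType) (H : lmodType R[i]) (ip : H -> H -> R[i]).
Hypothesis ipDZl : forall (a : R[i]) (x y z : H), ip (a *: x + y) z = a * ip x z + ip y z.
Hypothesis ipC : forall x y : H, ip x y = (ip y x)^*.
Hypothesis ip_ge0 : forall x : H, 0 <= ip x x.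
Hypothesis ip_eq0 : forall x : H, ip x x = 0 -> x = 0.

Lemma ipBl x y z : ip (x - y) z = ip x z - ip y z.
Proof. by rewrite addrC -scaleN1r ipDZl mulN1r addrC. Qed.

Lemma ipZl a x z : ip (a *: x) z = a * ip x z.
Proof. by rewrite -[a *: x]addr0 ipDZl -(subrr x) ipBl subrr addr0. Qed.

Lemma ipBr x y z : ip z (x - y) = ip z x - ip z y.
Proof. by rewrite ipC ipBl rmorphB /= -!ipC. Qed.

Lemma ipZr a x z : ip z (a *: x) = a^* * ip z x.
Proof. by rewrite ipC ipZl rmorphM /= -ipC. Qed.

Lemma ipl_inj x y : (forall z, ip x z = ip y z) -> x = y.
Proof. by move=> xy; apply/eqP; rewrite -subr_eq0; apply/eqP/ip_eq0; rewrite ipBl xy subrr. Qed.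

Lemma op_linear0 (T : H -> H) : op_linear T -> T 0 = 0.
Proof.
move=> T_lin; have := T_lin 1 0 0.
by rewrite !scale1r addr0 => /(canLR (addrK _)); rewrite subrr.
Qed.

Lemma op_linearZ (T : H -> H) c xi : op_linear T -> T (c *: xi) = c *: T xi.
Proof. by move=> T_lin; rewrite -[c *: xi]addr0 T_lin op_linear0 ?addr0. Qed.

Lemma adjoint_comp_rank_one (eta : H) (a b : H -> H) : op_linear b ->
  is_adjoint ip a (b \o rank_one ip eta eta) -> a =1 rank_one ip eta (b eta).
Proof.
move=> b_lin a_adj xi; apply: ipl_inj => z.
by rewrite a_adj /= /rank_one op_linearZ // ipZr ipZl -ipC mulrC.
Qed.

Section UnitVector.
Variable eta : H.
Hypothesis eta_unit : hnorm ip eta = 1.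
Local Notation e := (rank_one ip eta eta).

Lemma ip_unit : ip eta eta = 1.
Proof.
have eta_ge0 := ip_ge0 eta; have eta_real := ger0_Im eta_ge0.
move: eta_ge0 eta_unit; rewrite lecE /hnorm => /andP[_ Re_ge0] /(congr1 (fun t => t ^+ 2)).
rewrite sqr_sqrtr // expr1n => Re1.
by apply/eqP; rewrite eq_complex Re1 eta_real !eqxx.
Qed.

Lemma hnormZ_unit a : hnorm ip (a *: eta) = normc a.
Proof.
rewrite /hnorm ipZl ipZr ip_unit mulr1 -sqr_normc normr_normc -rmorphXn /=.
by rewrite sqrtr_sqr ger0_norm // normc_ge0.
Qed.

Lemma normc_ip_unit_le xi : normc (ip xi eta) <= hnorm ip xi.
Proof.
set a := ip xi eta.
have := ip_ge0 (xi - a *: eta).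
rewrite ipBl !ipBr !ipZr !ipZl ip_unit mulr1 (ipC eta xi) -/a.
have -> : ip xi xi - a^* * a - (a * a^* - a^* * a) = ip xi xi - a * a^* by ring.
rewrite -sqr_normc normr_normc -rmorphXn subr_ge0 lecE /= => /andP[_ a2_le].
by rewrite -(ger0_norm (normc_ge0 a)) -sqrtr_sqr ler_sqrt // (le_trans _ a2_le) ?sqr_ge0.
Qed.

Lemma opnorm_scale_rank_one d : opnorm ip (fun xi => d *: e xi) = normc d.
Proof.
have e_le xi : hnorm ip xi <= 1 -> hnorm ip (d *: e xi) <= normc d.
  move=> xi_le; rewrite /rank_one scalerA hnormZ_unit normcM.
  rewrite -[X in _ <= X]mulr1 ler_wpM2l ?normc_ge0 //.
  exact: le_trans (normc_ip_unit_le xi) xi_le.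
have e_eta : hnorm ip (d *: e eta) = normc d.
  by rewrite /rank_one ip_unit scale1r hnormZ_unit.
have eta_in : [set x | hnorm ip x <= 1] eta by rewrite /= eta_unit.
apply/eqP; rewrite eq_le; apply/andP; split.
  apply: ge_sup => [|_ [xi xi_le <-]]; last exact: e_le.
  by exists (hnorm ip (d *: e eta)), eta.
apply: sup_upper_bound; last by exists eta.
split; first by exists (hnorm ip (d *: e eta)), eta.
by exists (normc d) => _ [xi xi_le <-]; exact: e_le.
Qed.

Lemma rank_one_unit_compact : compact_op ip e.
Proof.
split.
  split; first by move=> a x y; rewrite /rank_one ipDZl scalerDl scalerA.
  by exists 1 => xi; rewrite /rank_one hnormZ_unit mul1r normc_ip_unit_le.
move=> u [M uM].
have [phi [phi_incr phi_cauchy]] := complex_bolzano_weierstrass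
  (fun n => le_trans (normc_ip_unit_le (u n)) (uM n)).
exists phi; split => // r r0; have [N hN] := phi_cauchy r r0.
by exists N => m n m_ge n_ge; rewrite /rank_one -scalerBl hnormZ_unit hN.
Qed.

Section InnerProductModule.
Variable A : set (H -> H).
Hypothesis A_linear : forall a, A a -> op_linear a.
Hypothesis A_e : A e.
Variables (M : lmodType R[i]) (act : M -> (H -> H) -> M) (ipM : M -> M -> (H -> H)).
Hypothesis hM : is_ip_module ip A act ipM.

Lemma ipM_Ee x y : Ee act e x -> Ee act e y ->
  forall xi, ipM x y xi = ipe ip ipM eta x y *: e xi.
Proof.
have [_ [_ [_ [_ [ipM_A [_ [ipM_act [ipM_adj _]]]]]]]] := hM.
move=> [x0 ->] [y0 ->].
have ipM_e xi : ipM (act x0 e) (act y0 e) xi = ip eta (ipM y0 x0 eta) *: e xi.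
  have adj : is_adjoint ip (ipM (act x0 e) y0) (ipM y0 x0 \o e).
    by rewrite -ipM_act //; exact: ipM_adj.
  rewrite ipM_act //= (adjoint_comp_rank_one (A_linear (ipM_A _ _)) adj).
  by rewrite /rank_one ipZl scalerA mulrC.
have -> : ipe ip ipM eta (act x0 e) (act y0 e) = ip eta (ipM y0 x0 eta).
  by rewrite /ipe ipM_e /rank_one ip_unit scale1r ipZl ip_unit mulr1.
exact: ipM_e.
Qed.

Lemma opnorm_ipM_Ee x y : Ee act e x -> Ee act e y ->
  opnorm ip (ipM x y) = normc (ipe ip ipM eta x y).
Proof.
move=> Ex Ey; rewrite -opnorm_scale_rank_one.
by congr opnorm; apply: funext; exact: ipM_Ee.
Qed.

Lemma mnorm_Ee x : Ee act e x -> mnorm ip ipM x = enorm ip ipM eta x.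
Proof.
have [_ [_ [_ [_ [_ [_ [_ [_ ipM_pos]]]]]]]] := hM.
move=> Ex; rewrite /mnorm /enorm opnorm_ipM_Ee // ger0_normc //.
by case: (ipM_pos x) => + _; apply.
Qed.

Lemma morth_Ee delta x y : Ee act e x -> Ee act e y ->
  eorth ip ipM eta delta x y <-> morth ip ipM delta x y.
Proof. by move=> Ex Ey; rewrite /eorth /morth opnorm_ipM_Ee // !mnorm_Ee // normr_normc lecR. Qed.

End InnerProductModule.
End UnitVector.
End InnerProduct.

Lemma Alinear_Ee (R : realType) (H : lmodType R[i]) (A : set (H -> H)) (a : H -> H)
    (E F : lmodType R[i]) (actE : E -> (H -> H) -> E) (actF : F -> (H -> H) -> F)
    (T : E -> F) :
  A a -> Alinear A actE actF T -> forall x, Ee actE a x -> Ee actF a (T x).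
Proof. by move=> Aa [_ T_act] _ [x ->]; exists (T x); rewrite T_act. Qed.

Theorem lemma3p4 (R : realType) (delta eps : R)
  (hdelta : 0 <= delta < 1) (heps : 0 <= eps < 1)
  (H : lmodType R[i]) (ip : H -> H -> R[i]) (hH : is_hilbert ip)
  (A : set (H -> H)) (hA : is_Cstar_subalg ip A)
  (hKA : forall T : H -> H, compact_op ip T -> A T)
  (E : lmodType R[i]) (actE : E -> (H -> H) -> E) (ipE : E -> E -> (H -> H))
  (hE : is_ip_module ip A actE ipE)
  (F : lmodType R[i]) (actF : F -> (H -> H) -> F) (ipF : F -> F -> (H -> H))
  (hF : is_ip_module ip A actF ipF)
  (eta : H) (heta : hnorm ip eta = 1) :
  let e := rank_one ip eta eta in
  (* (i) *)
  (forall x y : E, Ee actE e x -> Ee actE e y ->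
     (eorth ip ipE eta delta x y <-> morth ip ipE delta x y)) /\
  (* (ii) *)
  (forall T : E -> F, Alinear A actE actF T ->
     (forall x y : E, morth ip ipE delta x y -> morth ip ipF eps (T x) (T y)) ->
     [/\ (forall x : E, Ee actE e x -> Ee actF e (T x)),
         (forall (c : R[i]) (x y : E), Ee actE e x -> Ee actE e y ->
            T (c *: x + y) = c *: T x + T y)
       & (forall x y : E, Ee actE e x -> Ee actE e y ->
            eorth ip ipE eta delta x y -> eorth ip ipF eta eps (T x) (T y))]).
Proof.
move=> e; have [ipDZl [ipC [ip_ge0 [ip_eq0 _]]]] := hH.
have A_linear a : A a -> op_linear a by case: hA => A_bounded _ /A_bounded [].
have A_e : A e by apply/hKA/(rank_one_unit_compact ipDZl ipC ip_ge0 heta).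
have orthE := morth_Ee ipDZl ipC ip_ge0 ip_eq0 heta A_linear A_e hE.
have orthF := morth_Ee ipDZl ipC ip_ge0 ip_eq0 heta A_linear A_e hF.
split=> [|T T_lin T_orth]; first exact: orthE.
have T_Ee := Alinear_Ee A_e T_lin.
split=> [//|c x y _ _|x y Ex Ey]; first exact: T_lin.1.
by move/(orthE _ _ _ Ex Ey)/T_orth/(orthF _ _ _ (T_Ee _ Ex) (T_Ee _ Ey)).
Qed.
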